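(* For all $n\in\mathbb N$: $\mathsf d_n\otimes\mathsf I_n\mathrel{;}\mathsf I_n\otimes\mathsf e_n\ \sim\ \mathsf I_n\ \sim\ \mathsf I_n\otimes\mathsf d_n\mathrel{;}\mathsf e_n\otimes\mathsf I_n$, where $\otimes$ binds tighter than $;$.
   Context: Wire calculus. Fix a set $\Sigma$ of signals and $\iota\notin\Sigma$; $L=\Sigma\cup\{\iota\}$; $\vec\iota$ denotes a word of $\iota$'s. Prefix strings are words over atoms: signal variables $x$, binders $\lambda x$, $\iota$, constants $\sigma\in\Sigma$. Terms: $P::= Y \mid P\mathrel{;}P\mid P\otimes P\mid \frac{u}{v}.P\mid P+P\mid \mu Y{:}\tau.P$ ($\tau$ a sort $(k,l)$). In $\frac{u}{v}.P$, variables $x$ with $\lambda x$ in $uv$ are bound (set $bd$). Sorting: $P:(k,n),R:(n,l)\Rightarrow P\mathrel{;}R:(k,l)$; $P:(k,l),Q:(m,n)\Rightarrow P\otimes Q:(k+m,l+n)$; $\frac{u}{v}.P:(|u|,|v|)$ when $P$ has that sort; $\mu Y{:}\tau.P:\tau$; $P+Q:\tau$ for $P,Q:\tau$. Closed terms only. Transitions $P\xrightarrow[\vec b]{\vec a}Q$ are generated by: (Refl) $P\xrightarrow[\vec\iota]{\vec\iota}P$; ($\iota$L) $P\xrightarrow[\vec\iota]{\vec\iota}R\xrightarrow[\vec b]{\vec a}Q$ gives $P\xrightarrow[\vec b]{\vec a}Q$; ($\iota$R) $P\xrightarrow[\vec b]{\vec a}R\xrightarrow[\vec\iota]{\vec\iota}Q$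 gives $P\xrightarrow[\vec b]{\vec a}Q$; (Cut) $P\xrightarrow[\vec c]{\vec a}Q$, $R\xrightarrow[\vec b]{\vec c}S$ give $P\mathrel{;}R\xrightarrow[\vec b]{\vec a}Q\mathrel{;}S$; (Ten) $P\xrightarrow[\vec b]{\vec a}Q$, $R\xrightarrow[\vec d]{\vec c}S$ give $P\otimes R\xrightarrow[\vec b\vec d]{\vec a\vec c}Q\otimes S$; (Pref) for each $\sigma:bd\to L$, $\frac{u}{v}.P\xrightarrow[v|_\sigma]{u|_\sigma}P|_\sigma$; (Rec) $P[\mu Y.P/Y]\xrightarrow[\vec b]{\vec a}Q$ gives $\mu Y.P\xrightarrow[\vec b]{\vec a}Q$; ($+\iota$) $P\xrightarrow[\vec\iota]{\vec\iota}Q$, $R\xrightarrow[\vec\iota]{\vec\iota}S$ give $P+R\xrightarrow[\vec\iota]{\vec\iota}Q+S$; ($+$L/R) $P\xrightarrow[\vec b]{\vec a}Q$ with $\vec a\vec b$ not all $\iota$ gives $P+R\xrightarrow[\vec b]{\vec a}Q$ and $R+P\xrightarrow[\vec b]{\vec a}Q$. Bisimilarity $\sim$: $P\sim Q$ iff some relation $S\ni(P,Q)$ satisfies: if $(P',Q')\in S$ and $P'\xrightarrow[\vec b]{\vec a}P''$ then $Q'\xrightarrow[\vec b]{\vec a}Q''$ with $(P'',Q'')\in S$, and symmetrically. Constants: $\mathsf I_k=\mu Y.\frac{\lambda x_1\cdots\lambda x_k}{\lambda x_1\cdots\lambda x_k}.Y:(k,k)$, $\mathsf I=\mathsf I_1$;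 $\mathsf d=\mu Y.\frac{\epsilon}{\lambda x\lambda x}.Y:(0,2)$; $\mathsf e=\mu Y.\frac{\lambda x\lambda x}{\epsilon}.Y:(2,0)$ ($\epsilon$ empty string). Recursively: $\mathsf d_1=\mathsf d$, $\mathsf d_{n+1}=\mathsf d\mathrel{;}(\mathsf I\otimes\mathsf d_n\otimes\mathsf I)$; $\mathsf e_1=\mathsf e$, $\mathsf e_{n+1}=(\mathsf I_n\otimes\mathsf e\otimes\mathsf I_n)\mathrel{;}\mathsf e_n$; and $\mathsf d_0=\mathsf e_0=\mathsf I_0=0:=\mu Y{:}(0,0).Y$. So $\mathsf d_n:(0,2n)$, $\mathsf e_n:(2n,0)$. *)

From Stdlib Require Import List Arith Bool.
Import ListNotations.
Set Implicit Arguments.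

Section Wire.
Variable Sigma : Type.

Definition lab := option Sigma.
Definition iota : lab := None.

Inductive atom : Type :=
| AVar   (x : nat)
| ALam   (x : nat)
| AIota
| AConst (s : Sigma).

Inductive term : Type :=
| TVar (Y : nat)
| TSeq (P Q : term)
| TTen (P Q : term)
| TPre (u v : list atom) (P : term)
| TSum (P Q : term)
| TMu  (Y : nat) (k l : nat) (P : term).

Definition ctx := nat -> option (nat * nat).
Definition ctx_upd (G : ctx) (Y : nat) (t : nat * nat) : ctx :=
  fun Z => if Nat.eqb Z Y then Some t else G Z.

Inductive has_sort : ctx -> term -> nat -> nat -> Prop :=
| so_var G Y k l : G Y = Some (k, l) -> has_sort G (TVar Y) k l
| so_seq G P R k n l : has_sort G P k n -> has_sort G R n l -> has_sort G (TSeq P R) k l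
| so_ten G P Q k l m n : has_sort G P k l -> has_sort G Q m n ->
    has_sort G (TTen P Q) (k + m) (l + n)
| so_pre G u v P : has_sort G P (length u) (length v) ->
    has_sort G (TPre u v P) (length u) (length v)
| so_sum G P Q k l : has_sort G P k l -> has_sort G Q k l -> has_sort G (TSum P Q) k l
| so_mu G Y k l P : has_sort (ctx_upd G Y (k, l)) P k l -> has_sort G (TMu Y k l P) k l.

Definition sorted (P : term) (k l : nat) : Prop := has_sort (fun _ => None) P k l.

Fixpoint lam_vars (w : list atom) : list nat :=
  match w with
  | [] => []
  | ALam x :: w' => x :: lam_vars w'
  | _ :: w' => lam_vars w'
  end.

Definition memb (x : nat) (s : list nat) : bool := existsb (Nat.eqb x) s.

Definition atom_lab (sg : nat -> lab) (a : atom) : lab :=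
  match a with
  | AVar x | ALam x => sg x
  | AIota => None
  | AConst s => Some s
  end.
Definition word_lab (sg : nat -> lab) (w : list atom) : list lab := map (atom_lab sg) w.

Definition lab_atom (c : lab) : atom :=
  match c with None => AIota | Some s => AConst s end.

Definition atom_ssubst (bd : list nat) (sg : nat -> lab) (a : atom) : atom :=
  match a with
  | AVar x => if memb x bd then lab_atom (sg x) else a
  | ALam x => if memb x bd then lab_atom (sg x) else a
  | _ => a
  end.

Fixpoint ssubst (bd : list nat) (sg : nat -> lab) (P : term) : term :=
  match P with
  | TVar Y => TVar Y
  | TSeq P1 P2 => TSeq (ssubst bd sg P1) (ssubst bd sg P2)
  | TTen P1 P2 => TTen (ssubst bd sg P1) (ssubst bd sg P2)
  | TPre u v P1 =>
      let bd' := filter (fun x => negb (memb x (lam_vars (u ++ v)))) bd in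
      TPre (map (atom_ssubst bd' sg) u) (map (atom_ssubst bd' sg) v) (ssubst bd' sg P1)
  | TSum P1 P2 => TSum (ssubst bd sg P1) (ssubst bd sg P2)
  | TMu Y k l P1 => TMu Y k l (ssubst bd sg P1)
  end.

(* substitution of a (closed) term N for the process variable Y *)
Fixpoint psubst (P : term) (Y : nat) (N : term) : term :=
  match P with
  | TVar Z => if Nat.eqb Z Y then N else TVar Z
  | TSeq P1 P2 => TSeq (psubst P1 Y N) (psubst P2 Y N)
  | TTen P1 P2 => TTen (psubst P1 Y N) (psubst P2 Y N)
  | TPre u v P1 => TPre u v (psubst P1 Y N)
  | TSum P1 P2 => TSum (psubst P1 Y N) (psubst P2 Y N)
  | TMu Z k l P1 => if Nat.eqb Z Y then TMu Z k l P1 else TMu Z k l (psubst P1 Y N)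
  end.

Definition all_iota (w : list lab) : Prop := Forall (fun c => c = None) w.

(* step P a b Q  is  P --(a above / b below)--> Q *)
Inductive step : term -> list lab -> list lab -> term -> Prop :=
| st_refl P k l : sorted P k l -> step P (repeat None k) (repeat None l) P
| st_iotaL P R Q a b a0 b0 : all_iota a0 -> all_iota b0 ->
    step P a0 b0 R -> step R a b Q -> step P a b Q
| st_iotaR P R Q a b a0 b0 : all_iota a0 -> all_iota b0 ->
    step P a b R -> step R a0 b0 Q -> step P a b Q
| st_cut P Q R S a b c : step P a c Q -> step R c b S -> step (TSeq P R) a b (TSeq Q S)
| st_ten P Q R S a b c d : step P a b Q -> step R c d S ->
    step (TTen P R) (a ++ c) (b ++ d) (TTen Q S)
| st_pref u v P (sg : nat -> lab) :
    step (TPre u v P) (word_lab sg u) (word_lab sg v) (ssubst (lam_vars (u ++ v)) sg P)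
| st_rec Y k l P a b Q : step (psubst P Y (TMu Y k l P)) a b Q -> step (TMu Y k l P) a b Q
| st_sum_iota P Q R S a b : all_iota a -> all_iota b ->
    step P a b Q -> step R a b S -> step (TSum P R) a b (TSum Q S)
| st_sumL P Q R a b : ~ all_iota (a ++ b) -> step P a b Q -> step (TSum P R) a b Q
| st_sumR P Q R a b : ~ all_iota (a ++ b) -> step P a b Q -> step (TSum R P) a b Q.

Definition bisimulation (S : term -> term -> Prop) : Prop :=
  forall P Q, S P Q ->
    (forall a b P', step P a b P' -> exists Q', step Q a b Q' /\ S P' Q') /\
    (forall a b Q', step Q a b Q' -> exists P', step P a b P' /\ S P' Q').

Definition bisim (P Q : term) : Prop := exists S, S P Q /\ bisimulation S.

(* constants; process variable Y is 0, signal variables x_i are i *)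
Definition zero : term := TMu 0 0 0 (TVar 0).

Definition In (k : nat) : term :=
  match k with
  | 0 => zero
  | _ => TMu 0 k k (TPre (map ALam (seq 1 k)) (map ALam (seq 1 k)) (TVar 0))
  end.
Definition I1 : term := In 1.

Definition dd : term := TMu 0 0 2 (TPre [] [ALam 1; ALam 1] (TVar 0)).
Definition ee : term := TMu 0 2 0 (TPre [ALam 1; ALam 1] [] (TVar 0)).

Fixpoint dn (n : nat) : term :=
  match n with
  | 0 => zero
  | S m => match m with
           | 0 => dd
           | S _ => TSeq dd (TTen (TTen I1 (dn m)) I1)
           end
  end.

Fixpoint en (n : nat) : term :=
  match n with
  | 0 => zero
  | S m => match m with
           | 0 => ee
           | S _ => TSeq (TTen (TTen (In m) ee) (In m)) (en m)
           end
  end.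

End Wire.

Arguments zero {Sigma}.
Arguments dd {Sigma}.
Arguments ee {Sigma}.
Arguments In {Sigma} k.
Arguments I1 {Sigma}.
Arguments dn {Sigma} n.
Arguments en {Sigma} n.

(* Each of [I_n], [d_n], [e_n] lies in a family of states which all have the
   same transitions: [I_n] copies a word [w] from top to bottom, [d_n] emits
   [w ++ rev w] below and [e_n] absorbs [w ++ rev w] above.  Such uniform
   behaviour is preserved by [;] (relational composition of the labels) and
   by [⊗] (concatenation), and two uniform families with the same labels are
   bisimilar.  Both snake composites therefore behave like [I_n], because
   [w ++ rev w ++ w'] can only be fed into [I_n ⊗ e_n] when [w' = w]. *)
From Stdlib Require Import List Arith Lia.
Import ListNotations.

Section Uniform.
Variable Sg : Type.

Definition labels := list (lab Sg) -> list (lab Sg) -> Prop.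

Record uniform (St : term Sg -> Prop) (T : labels) : Prop := {
  uniform_step : forall X a b Q, St X -> step X a b Q -> St Q /\ T a b;
  uniform_enabled : forall X a b, St X -> T a b -> exists Q, St Q /\ step X a b Q }.

Definition behaves_as (P : term Sg) (T : labels) : Prop :=
  exists St, uniform St T /\ St P.

Definition label_comp (T1 T2 : labels) : labels :=
  fun a b => exists c, T1 a c /\ T2 c b.

Definition label_tensor (T1 T2 : labels) : labels :=
  fun a b => exists a1 a2 b1 b2, a = a1 ++ a2 /\ b = b1 ++ b2 /\ T1 a1 b1 /\ T2 a2 b2.

Lemma behaves_as_ext P (T T' : labels) :
  behaves_as P T -> (forall a b, T a b <-> T' a b) -> behaves_as P T'.
Proof.
  intros [St [[Hstep Hen] HP]] E; exists St; split; [split|]; auto.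
  - intros X a b Q HX Hs; destruct (Hstep X a b Q HX Hs); split; auto; apply E; auto.
  - intros X a b HX HT; apply Hen; auto; apply E; auto.
Qed.

Lemma bisim_behaves_as P Q (T1 T2 : labels) :
  behaves_as P T1 -> behaves_as Q T2 -> (forall a b, T1 a b <-> T2 a b) -> bisim P Q.
Proof.
  intros [St1 [[A1 B1] HP]] [St2 [[A2 B2] HQ]] E.
  exists (fun X Y => St1 X /\ St2 Y); split; auto.
  intros X Y [HX HY]; split.
  - intros a b X' Hs; destruct (A1 _ _ _ _ HX Hs) as [HX' HT].
    destruct (B2 Y a b HY) as [Y' [HY' Hs']]; [apply E; auto|].
    exists Y'; auto.
  - intros a b Y' Hs; destruct (A2 _ _ _ _ HY Hs) as [HY' HT].
    destruct (B1 X a b HX) as [X' [HX' Hs']]; [apply E; auto|].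
    exists X'; auto.
Qed.

(* In every induction on [step] below, the two rules for idle steps are
   discharged by the invariance of the family alone. *)
Ltac idle_cases IH1 IH2 HX :=
  first [ apply IH2; apply IH1; exact HX
        | let Hmid := fresh in let Hlab := fresh in
          destruct (IH1 HX) as [Hmid Hlab]; destruct (IH2 Hmid); split; auto ].

Lemma behaves_as_seq P R T1 T2 :
  behaves_as P T1 -> behaves_as R T2 -> behaves_as (TSeq P R) (label_comp T1 T2).
Proof.
  intros [St1 [[A1 B1] HP]] [St2 [[A2 B2] HR]].
  exists (fun X => exists P R, X = TSeq P R /\ St1 P /\ St2 R).
  split; [split|eauto].
  - intros X a b Q HX Hs; revert HX.
    induction Hs; intros HX; try idle_cases IHHs1 IHHs2 HX;
      destruct HX as [X1 [X2 [E [H1 H2]]]]; try discriminate.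
    + subst; inversion H; subst; split; [exists X1, X2; auto|].
      exists (repeat None n); split; [eapply A1 | eapply A2]; eauto; constructor; auto.
    + injection E as -> ->.
      destruct (A1 _ _ _ _ H1 Hs1), (A2 _ _ _ _ H2 Hs2).
      split; [exists Q, S; auto | exists c; auto].
  - intros X a b [P0 [R0 [-> [H1 H2]]]] [c [T1c T2c]].
    destruct (B1 P0 a c H1 T1c) as [P' [HP' S1]].
    destruct (B2 R0 c b H2 T2c) as [R' [HR' S2]].
    exists (TSeq P' R'); split; [exists P', R'; auto | eapply st_cut; eauto].
Qed.

Lemma behaves_as_ten P R T1 T2 :
  behaves_as P T1 -> behaves_as R T2 -> behaves_as (TTen P R) (label_tensor T1 T2).
Proof.
  intros [St1 [[A1 B1] HP]] [St2 [[A2 B2] HR]].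
  exists (fun X => exists P R, X = TTen P R /\ St1 P /\ St2 R).
  split; [split|eauto].
  - intros X a b Q HX Hs; revert HX.
    induction Hs; intros HX; try idle_cases IHHs1 IHHs2 HX;
      destruct HX as [X1 [X2 [E [H1 H2]]]]; try discriminate.
    + subst; inversion H; subst; split; [exists X1, X2; auto|].
      exists (repeat None k0), (repeat None m), (repeat None l0), (repeat None n).
      rewrite !repeat_app; repeat split; [eapply A1 | eapply A2]; eauto; constructor; auto.
    + injection E as -> ->.
      destruct (A1 _ _ _ _ H1 Hs1), (A2 _ _ _ _ H2 Hs2).
      split; [exists Q, S; auto | exists a, c, b, d; auto].
  - intros X a b [P0 [R0 [-> [H1 H2]]]] [a1 [a2 [b1 [b2 [-> [-> [T1c T2c]]]]]]].
    destruct (B1 P0 a1 b1 H1 T1c) as [P' [HP' S1]].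
    destruct (B2 R0 a2 b2 H2 T2c) as [R' [HR' S2]].
    exists (TTen P' R'); split; [exists P', R'; auto | apply st_ten; auto].
Qed.

Lemma behaves_as_zero : behaves_as zero (fun a b => a = [] /\ b = []).
Proof.
  exists (fun X => X = zero); split; [split|reflexivity].
  - intros X a b Q HX Hs; revert HX.
    induction Hs; intros HX; try idle_cases IHHs1 IHHs2 HX; subst; try discriminate.
    + inversion H; subst; auto.
    + injection HX as -> -> -> ->; apply IHHs; reflexivity.
  - intros X a b -> [-> ->]; exists zero; split; auto.
    apply st_refl with (k := 0) (l := 0); repeat constructor.
Qed.

Definition loop (u v : list (atom Sg)) : term Sg :=
  TMu 0 (length u) (length v) (TPre u v (TVar Sg 0)).

Definition loop_labels (u v : list (atom Sg)) : labels :=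
  fun a b => (a = repeat None (length u) /\ b = repeat None (length v)) \/
             exists sg, a = word_lab sg u /\ b = word_lab sg v.

Lemma filter_not_memb_nil (l s : list nat) :
  incl l s -> filter (fun x => negb (memb x s)) l = [].
Proof.
  induction l as [|x l IH]; simpl; intros H; auto.
  replace (memb x s) with true; [apply IH; intros y Hy; apply H; right; exact Hy|].
  symmetry; apply existsb_exists; exists x; split; [apply H; left; auto | apply Nat.eqb_refl].
Qed.

Lemma map_atom_ssubst_nil (sg : nat -> lab Sg) u : map (atom_ssubst [] sg) u = u.
Proof. induction u as [|[] u IH]; simpl; f_equal; auto. Qed.

(* Every variable being substituted is rebound by the prefix of the loop, so it
   is filtered out before reaching an atom. *)
Lemma ssubst_loop bd (u v : list (atom Sg)) sg :
  incl bd (lam_vars (u ++ v)) -> ssubst bd sg (loop u v) = loop u v.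
Proof.
  intros Hbd; unfold loop; simpl.
  rewrite filter_not_memb_nil, !map_atom_ssubst_nil; auto.
Qed.

Lemma sorted_loop u v : sorted (loop u v) (length u) (length v).
Proof. repeat constructor. Qed.

Lemma behaves_as_loop u v : behaves_as (loop u v) (loop_labels u v).
Proof.
  exists (fun X => X = loop u v \/ X = TPre u v (loop u v)); split; [split|auto].
  - intros X a b Q HX Hs; revert HX.
    induction Hs; intros HX; try idle_cases IHHs1 IHHs2 HX;
      try (destruct HX as [E|E]; discriminate).
    + split; auto; left; destruct HX as [-> | ->]; inversion H; subst; auto.
    + destruct HX as [E|E]; [discriminate|]; injection E as -> -> ->.
      rewrite ssubst_loop by apply incl_refl.
      split; [left; reflexivity | right; eauto].
    + destruct HX as [E|E]; [|discriminate]; injection E as -> -> -> ->.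
      apply IHHs; right; reflexivity.
  - intros X a b HX [[-> ->] | [sg [-> ->]]].
    + exists X; split; auto; apply st_refl.
      destruct HX as [-> | ->]; [apply sorted_loop | constructor; apply sorted_loop].
    + exists (loop u v); split; auto.
      assert (Hpre := st_pref u v (loop u v) sg).
      rewrite ssubst_loop in Hpre by apply incl_refl.
      destruct HX as [-> | ->]; [apply st_rec|]; exact Hpre.
Qed.

Definition id_labels n : labels := fun a b => a = b /\ length a = n.
Definition dn_labels n : labels :=
  fun a b => a = [] /\ exists w, length w = n /\ b = w ++ rev w.
Definition en_labels n : labels :=
  fun a b => b = [] /\ exists w, length w = n /\ a = w ++ rev w.

Lemma map_nth_seq (d : lab Sg) (w : list (lab Sg)) s :
  map (fun i => nth (i - s) w d) (seq s (length w)) = w.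
Proof.
  revert s; induction w as [|x w IH]; intros s; simpl; auto.
  rewrite Nat.sub_diag; f_equal.
  rewrite <- (IH (S s)) at 2; apply map_ext_in; intros i Hi.
  apply in_seq in Hi; replace (i - s) with (S (i - S s)) by lia; reflexivity.
Qed.

Lemma behaves_as_In n : behaves_as (In n) (id_labels n).
Proof.
  destruct n as [|m].
  - eapply behaves_as_ext; [apply behaves_as_zero|]; intros a b; unfold id_labels.
    split; [intros [-> ->]; auto | intros [-> Hb]; destruct b; [auto | discriminate]].
  - set (u := map (@ALam Sg) (seq 1 (S m))).
    assert (Lu : length u = S m) by (unfold u; rewrite length_map, length_seq; auto).
    replace (In (S m)) with (loop u u) by (unfold loop; rewrite Lu; reflexivity).
    eapply behaves_as_ext; [apply behaves_as_loop|]; intros a b; unfold id_labels.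
    split.
    + intros [[-> ->] | [sg [-> ->]]]; [rewrite repeat_length | unfold word_lab;
        rewrite length_map]; auto.
    + intros [-> Hb]; right; exists (fun i => nth (i - 1) b None).
      enough (E : word_lab (fun i => nth (i - 1) b None) u = b) by (rewrite E; auto).
      unfold word_lab, u; rewrite map_map, <- Hb; apply map_nth_seq.
Qed.

Lemma behaves_as_dd : behaves_as dd (dn_labels 1).
Proof.
  eapply behaves_as_ext; [apply (behaves_as_loop [] [ALam Sg 1; ALam Sg 1])|].
  intros a b; unfold loop_labels, dn_labels; simpl; split.
  - intros [[-> ->] | [sg [-> ->]]]; split; auto; [exists [None] | exists [sg 1]]; auto.
  - intros [-> [[|x [|]] [Hw ->]]]; try discriminate; right; exists (fun _ => x); auto.
Qed.

Lemma behaves_as_ee : behaves_as ee (en_labels 1).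
Proof.
  eapply behaves_as_ext; [apply (behaves_as_loop [ALam Sg 1; ALam Sg 1] [])|].
  intros a b; unfold loop_labels, en_labels; simpl; split.
  - intros [[-> ->] | [sg [-> ->]]]; split; auto; [exists [None] | exists [sg 1]]; auto.
  - intros [-> [[|x [|]] [Hw ->]]]; try discriminate; right; exists (fun _ => x); auto.
Qed.

Lemma app_inv_length {A} (u v w x : list A) :
  length u = length w -> u ++ v = w ++ x -> u = w /\ v = x.
Proof.
  revert w; induction u as [|y u IH]; intros [|z w]; simpl; intros H E; try discriminate; auto.
  injection H as H; injection E as -> E; destruct (IH w H E) as [-> ->]; auto.
Qed.

Lemma dn_labels_step n a b :
  label_comp (dn_labels 1) (label_tensor (label_tensor (id_labels 1) (dn_labels (S n)))
    (id_labels 1)) a b <-> dn_labels (S (S n)) a b.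
Proof.
  unfold label_comp, label_tensor, dn_labels, id_labels; split.
  - intros [c [[-> [w [Lw ->]]] [a1 [a2 [b1 [b2 [Ec [-> [Hmid [<- L2]]]]]]]]]].
    destruct Hmid as [a3 [a4 [b3 [b4 [-> [-> [[<- L3] [-> [v [Lv ->]]]]]]]]]].
    destruct w as [|y [|]]; try discriminate.
    destruct a3 as [|z [|]]; try discriminate.
    destruct a2 as [|t [|]]; try discriminate.
    simpl in Ec; injection Ec as -> ->; split; auto.
    exists (t :: v); split; [simpl; auto | simpl; rewrite <- !app_assoc; reflexivity].
  - intros [-> [[|t w] [Lw ->]]]; try discriminate.
    exists [t; t]; split; [split; [auto | exists [t]; auto]|].
    exists [t], [t], ([t] ++ (w ++ rev w)), [t]; repeat split; auto.
    + simpl; rewrite <- !app_assoc; reflexivity.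
    + exists [t], [], [t], (w ++ rev w); repeat split; auto; exists w; auto.
Qed.

Lemma en_labels_step n a b :
  label_comp (label_tensor (label_tensor (id_labels (S n)) (en_labels 1)) (id_labels (S n)))
    (en_labels (S n)) a b <-> en_labels (S (S n)) a b.
Proof.
  unfold label_comp, label_tensor, en_labels, id_labels; split.
  - intros [c [[a1 [a2 [b1 [b2 [-> [-> [Hmid [<- L2]]]]]]]] [-> [w [Lw Ec]]]]].
    destruct Hmid as [a3 [a4 [b3 [b4 [-> [-> [[<- L3] [-> [y [Ly ->]]]]]]]]]].
    rewrite !app_nil_r in Ec.
    destruct (app_inv_length _ _ _ _ (eq_trans L3 (eq_sym Lw)) Ec) as [-> ->].
    destruct y as [|y [|]]; try discriminate.
    split; auto; exists (w ++ [y]); split; [rewrite length_app; simpl; lia|].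
    rewrite rev_app_distr; simpl; rewrite <- !app_assoc; reflexivity.
  - intros [-> [v [Lv ->]]].
    destruct (exists_last (l := v)) as [w [y ->]]; [intros ->; discriminate|].
    rewrite length_app in Lv; simpl in Lv.
    exists (w ++ rev w); split.
    + exists (w ++ [y; y]), (rev w), w, (rev w); split; [|split; [reflexivity|split]].
      * rewrite rev_app_distr; simpl; rewrite <- !app_assoc; reflexivity.
      * exists w, [y; y], w, []; rewrite app_nil_r; repeat split; try lia; exists [y]; auto.
      * split; auto; rewrite length_rev; lia.
    + split; auto; exists w; split; auto; lia.
Qed.

Lemma behaves_as_dn n : behaves_as (dn n) (dn_labels n).
Proof.
  induction n as [|[|m] IH].
  - eapply behaves_as_ext; [apply behaves_as_zero|]; intros a b; unfold dn_labels.
    split; [intros [-> ->]; split; auto; exists []; auto|].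
    intros [-> [[|] [Hw ->]]]; [auto | discriminate].
  - apply behaves_as_dd.
  - eapply behaves_as_ext; [|apply dn_labels_step].
    apply behaves_as_seq; [apply behaves_as_dd|].
    repeat apply behaves_as_ten; auto; apply behaves_as_In.
Qed.

Lemma behaves_as_en n : behaves_as (en n) (en_labels n).
Proof.
  induction n as [|[|m] IH].
  - eapply behaves_as_ext; [apply behaves_as_zero|]; intros a b; unfold en_labels.
    split; [intros [-> ->]; split; auto; exists []; auto|].
    intros [-> [[|] [Hw ->]]]; [auto | discriminate].
  - apply behaves_as_ee.
  - eapply behaves_as_ext; [|apply en_labels_step].
    apply behaves_as_seq; [|exact IH].
    repeat apply behaves_as_ten; try apply behaves_as_In; apply behaves_as_ee.
Qed.

Lemma snake_left_labels n a b :
  label_comp (label_tensor (dn_labels n) (id_labels n))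
    (label_tensor (id_labels n) (en_labels n)) a b <-> id_labels n a b.
Proof.
  unfold label_comp, label_tensor, id_labels, dn_labels, en_labels; split; intros H.
  - destruct H as [c [[a1 [a2 [b1 [b2 [-> [-> [[-> [w [Lw ->]]] [<- La2]]]]]]]]
      [a1' [a2' [b1' [b2' [Ec [-> [[<- L1] [-> [u [Lu ->]]]]]]]]]]]].
    rewrite <- app_assoc in Ec.
    destruct (app_inv_length _ _ _ _ (eq_trans Lw (eq_sym L1)) Ec) as [-> Ec2].
    assert (Lr : length (rev a1') = length u) by (rewrite length_rev; lia).
    destruct (app_inv_length _ _ _ _ Lr Ec2) as [E1 ->].
    rewrite <- E1, rev_involutive, app_nil_r; auto.
  - destruct H as [-> La]; exists ((b ++ rev b) ++ b); split.
    + exists [], b, (b ++ rev b), b; repeat split; auto; exists b; auto.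
    + exists b, (rev b ++ b), b, []; rewrite <- app_assoc, app_nil_r; repeat split; auto.
      exists (rev b); rewrite rev_involutive, length_rev; auto.
Qed.

Lemma snake_right_labels n a b :
  label_comp (label_tensor (id_labels n) (dn_labels n))
    (label_tensor (en_labels n) (id_labels n)) a b <-> id_labels n a b.
Proof.
  unfold label_comp, label_tensor, id_labels, dn_labels, en_labels; split; intros H.
  - destruct H as [c [[a1 [a2 [b1 [b2 [-> [-> [[<- L1] [-> [w [Lw ->]]]]]]]]]]
      [a1' [a2' [b1' [b2' [Ec [-> [[-> [u [Lu ->]]] [<- La2]]]]]]]]]].
    rewrite <- app_assoc in Ec.
    destruct (app_inv_length _ _ _ _ (eq_trans L1 (eq_sym Lu)) Ec) as [-> Ec2].
    assert (Lr : length w = length (rev u)) by (rewrite length_rev; lia).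
    destruct (app_inv_length _ _ _ _ Lr Ec2) as [-> E2].
    rewrite app_nil_r; simpl; rewrite <- E2, rev_involutive; auto.
  - destruct H as [-> La]; exists (b ++ (rev b ++ b)); split.
    + exists b, [], b, (rev b ++ b); rewrite app_nil_r; repeat split; auto.
      exists (rev b); rewrite rev_involutive, length_rev; auto.
    + exists (b ++ rev b), b, [], b; rewrite <- app_assoc; repeat split; auto; exists b; auto.
Qed.

End Uniform.

Theorem mainTheorem5 (Sigma : Type) (n : nat) :
  bisim (TSeq (TTen (@dn Sigma n) (In n)) (TTen (In n) (en n))) (In n) /\
  bisim (In n) (TSeq (TTen (@In Sigma n) (dn n)) (TTen (en n) (In n))).
Proof.
  pose proof (behaves_as_In Sigma n) as HI.
  pose proof (behaves_as_dn Sigma n) as HD.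
  pose proof (behaves_as_en Sigma n) as HE.
  split.
  - eapply bisim_behaves_as; [| exact HI | apply snake_left_labels].
    apply behaves_as_seq; apply behaves_as_ten; assumption.
  - eapply bisim_behaves_as; [exact HI | | intros a b; symmetry; apply snake_right_labels].
    apply behaves_as_seq; apply behaves_as_ten; assumption.
Qed.
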